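(* Let $K\in\mathcal{U}C_b^3(\mathbb{R}^d,\mathbb{R}^{d\times d})$ and define, for $\xi\in\mathcal{M}$, $B(\xi)=K\ast\xi$. Then $B$ maps $\mathcal{M}$ continuously into $C_b^2(\mathbb{R}^d,\mathbb{R}^d)$ (continuity with respect to the metric $d$ on $\mathcal{M}$), and there is a constant $C_B>0$ such that for all $\xi,\xi'\in\mathcal{M}$: (B1) $\|B(\xi)\|_{C_b^2}\le C_B(\|\xi\|+1)$; (B2) $\|B(\xi)-B(\xi')\|_\infty\le C_B\|\xi-\xi'\|$; (B3) $\|DB(\xi)-DB(\xi')\|_\infty\le C_B\|\xi-\xi'\|$, where $DB(\xi)$ denotes the spatial derivative of the vector field $B(\xi)$.
   Context: $C_b^k(\mathbb{R}^d,\mathbb{R}^m)$ is the space of $C^k$ functions bounded together with all derivatives up to order $k$ (with norm $\|\cdot\|_{C^k_b}$ the sum of the sup norms of these derivatives); $\mathcal{U}C_b^3(\mathbb{R}^d,\mathbb{R}^m)$ is the subset of $C_b^3$ of those $f$ with $f$, $Df$, $D^2f$ uniformly continuous. $\mathcal{M}$ is the dual space of $C_b(\mathbb{R}^d;\mathbb{R}^d)$ (bounded continuous vector fields with sup norm $\|\cdot\|_\infty$), with dual norm $|\xi|_{\mathcal{M}}=\sup_{\|\theta\|_\infty\le 1}|\xi(\theta)|$. The weak norm is $\|\xi\|=\sup\{\xi(\theta):\|\theta\|_\infty+\mathrm{Lip}(\theta)\le 1\}$, $\mathrm{Lip}(\theta)$ the Lipschitz constant, and $d(\xi,\xi')=\|\xi-\xi'\|$.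 For $\xi\in\mathcal{M}$ and continuous bounded $K:\mathbb{R}^d\to\mathbb{R}^{d\times d}$, $K\ast\xi$ is the vector field with components $(K\ast\xi)_i(x)=\xi(K_{i\cdot}(x-\cdot))$, where $K_{i\cdot}(z)=(K_{ij}(z))_{j=1,\dots,d}$. *)

(* R^d is modelled by 'rV[R]_d (max norm). *)
From HB Require Import structures.
From mathcomp Require Import all_boot all_order all_algebra.
From mathcomp Require Import all_classical all_reals all_analysis.
Set Implicit Arguments. Unset Strict Implicit. Unset Printing Implicit Defensive.
Import Order.TTheory GRing.Theory Num.Theory.
Import numFieldNormedType.Exports.
Local Open Scope classical_set_scope.
Local Open Scope ring_scope.

Definition evec (R : realType) (d : nat) (i : 'I_d) : 'rV[R]_d := delta_mx 0 i.

Definition pder (R : realType) (d : nat) (V : normedModType R)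
  (s : seq 'I_d) (f : 'rV[R]_d -> V) : 'rV[R]_d -> V :=
  foldr (fun i g => fun x => derive g x (evec R i)) f s.

Definition bounded_fun (R : realType) (d : nat) (V : normedModType R)
  (g : 'rV[R]_d -> V) : Prop := exists M : R, forall x, `|g x| <= M.

Definition unif_cont (R : realType) (d : nat) (V : normedModType R)
  (g : 'rV[R]_d -> V) : Prop :=
  forall e : R, 0 < e -> exists2 del : R, 0 < del &
    forall x y, `|x - y| < del -> `|g x - g y| < e.

Definition Cb (R : realType) (d : nat) (V : normedModType R) (k : nat)
  (f : 'rV[R]_d -> V) : Prop :=
  (forall s : seq 'I_d, (size s < k)%N ->
     forall (i : 'I_d) (x : 'rV[R]_d), derivable (pder s f) x (evec R i)) /\
  (forall s : seq 'I_d, (size s <= k)%N ->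
     continuous (pder s f) /\ bounded_fun (pder s f)).

Definition UCb3 (R : realType) (d : nat) (V : normedModType R)
  (f : 'rV[R]_d -> V) : Prop :=
  Cb 3 f /\ forall s : seq 'I_d, (size s <= 2)%N -> unif_cont (pder s f).

Definition supnorm (R : realType) (d : nat) (V : normedModType R)
  (g : 'rV[R]_d -> V) : R := sup [set `|g x| | x in setT].

Definition supnorm_ord (R : realType) (d : nat) (V : normedModType R)
  (j : nat) (f : 'rV[R]_d -> V) : R :=
  sup [set r | exists (s : seq 'I_d) (x : 'rV[R]_d), size s = j /\ r = `|pder s f x|].

Definition Cb_norm (R : realType) (d : nat) (V : normedModType R)
  (k : nat) (f : 'rV[R]_d -> V) : R :=
  \sum_(j < k.+1) supnorm_ord j f.

Definition BCvf (R : realType) (d : nat) (th : 'rV[R]_d -> 'rV[R]_d) : Prop :=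
  continuous th /\ bounded_fun th.

(* the dual space M of C_b(R^d;R^d): bounded linear functionals on it
   (only their values on BCvf matter) *)
Definition in_M (R : realType) (d : nat) (xi : ('rV[R]_d -> 'rV[R]_d) -> R) : Prop :=
  (forall (a : R) th1 th2, BCvf th1 -> BCvf th2 ->
      xi (fun x => a *: th1 x + th2 x) = a * xi th1 + xi th2) /\
  (exists c : R, forall th, BCvf th -> `|xi th| <= c * supnorm th).

Definition lip_le (R : realType) (d : nat) (th : 'rV[R]_d -> 'rV[R]_d) (L : R) : Prop :=
  forall x y, `|th x - th y| <= L * `|x - y|.

Definition wnorm (R : realType) (d : nat) (xi : ('rV[R]_d -> 'rV[R]_d) -> R) : R :=
  sup [set xi th | th in [set th | BCvf th /\
         exists L : R, lip_le th L /\ supnorm th + L <= 1]].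

Definition Msub (R : realType) (d : nat) (xi xi' : ('rV[R]_d -> 'rV[R]_d) -> R) :=
  fun th => xi th - xi' th.

Definition Kconv (R : realType) (d : nat) (K : 'rV[R]_d -> 'M[R]_(d,d))
  (xi : ('rV[R]_d -> 'rV[R]_d) -> R) : 'rV[R]_d -> 'rV[R]_d :=
  fun x => \row_(i < d) xi (fun z => row i (K (x - z))).

From Pilot Require Import Defs.
From HB Require Import structures.
From mathcomp Require Import all_boot all_order all_algebra.
From mathcomp Require Import all_classical all_reals all_analysis.
From mathcomp Require Import ring lra.
Set Implicit Arguments.
Import Order.TTheory GRing.Theory Num.Theory.
Import numFieldNormedType.Exports.
Local Open Scope classical_set_scope.
Local Open Scope ring_scope.

(* Differentiation passes under [xi]: the difference quotients of [K] and of
   its first derivatives converge uniformly (mean value theorem plus uniform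
   continuity of [DK] and [D^2 K]), and [xi] is linear and bounded in sup norm,
   so [d_s (K * xi) = (d_s K) * xi] for [|s| <= 2].  For [G = d_s K], every
   test field [G_{i.}(x - .)] has sup norm at most [|G|_oo] and Lipschitz
   constant at most [d |DG|_oo]; rescaling it into the unit ball of the dual
   norm gives [|d_s B(xi)(x)| <= C |xi|].  Since [B] is linear in [xi], the
   three estimates and the continuity of [B] follow. *)

Section MatrixNorm.
Context {R : realType}.

Lemma normr_mx_entry m n (A : 'M[R]_(m, n)) a b : `|A a b| <= `|A|.
Proof.
rewrite [leRHS]/Num.Def.normr/= mx_normrE.
by apply: le_trans; last exact: (le_bigmax _ _ (a, b)).
Qed.

Lemma mx_normr_le m n (A : 'M[R]_(m, n)) e :
  0 <= e -> (forall a b, `|A a b| <= e) -> `|A| <= e.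
Proof. by move=> e0 Ae; rewrite [leLHS]/Num.Def.normr/= mx_normrE bigmax_le. Qed.

Lemma rowB m n (A B : 'M[R]_(m, n)) a : row a (A - B) = row a A - row a B.
Proof. by apply/rowP => j; rewrite !mxE. Qed.

Lemma normr_row m n (A : 'M[R]_(m, n)) a : `|row a A| <= `|A|.
Proof. by apply: mx_normr_le => // i j; rewrite mxE; exact: normr_mx_entry. Qed.

Lemma continuous_at_dominated {U V W : normedModType R} (f : U -> V) (g : U -> W) x :
  {for x, continuous f} -> (forall y, `|g x - g y| <= `|f x - f y|) ->
  {for x, continuous g}.
Proof.
move=> /cvgrPdist_lt cf gf; apply/cvgrPdist_lt => e e0.
by near do apply: le_lt_trans (gf _) _; apply: cf.
Unshelve. all: by end_near. Qed.

End MatrixNorm.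

Lemma lip_le_ge0_or_zero {R : realType} n (th : 'rV[R]_n -> 'rV[R]_n) L :
  lip_le th L -> 0 <= L \/ forall x, `|th x| = 0.
Proof.
case: n th => [|k] th thL.
  right => x; apply/eqP; rewrite eq_le normr_ge0 andbT.
  by apply: mx_normr_le => // a [].
left; have := thL 0 (delta_mx 0 0); rewrite sub0r normrN.
have e_gt0 : 0 < `|delta_mx 0 0 : 'rV[R]_k.+1|.
  by apply: lt_le_trans (normr_mx_entry _ 0 0); rewrite mxE !eqxx normr1.
by move=> h; rewrite -(pmulr_lge0 _ e_gt0); exact: le_trans h.
Qed.

Section DualNorm.
Context {R : realType} {d : nat}.
Implicit Types (th f g : 'rV[R]_d -> 'rV[R]_d) (xi : ('rV[R]_d -> 'rV[R]_d) -> R).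

Lemma BCvf_comb (a : R) f g : BCvf f -> BCvf g -> BCvf (fun z => a *: f z + g z).
Proof.
move=> [cf [Mf bf]] [cg [Mg bg]]; split.
  by move=> x; apply: continuousD (cg x); exact: continuousZl_tmp (cf x).
exists (`|a| * Mf + Mg) => x; rewrite (le_trans (ler_normD _ _))// lerD// normrZ.
by rewrite ler_wpM2l.
Qed.

Lemma BCvf0 : BCvf (fun _ : 'rV[R]_d => 0 : 'rV[R]_d).
Proof. by split; [move=> x; exact: cst_continuous | exists 0 => x; rewrite normr0]. Qed.

Lemma BCvfZ (a : R) f : BCvf f -> BCvf (fun z => a *: f z).
Proof.
move=> bf; have := BCvf_comb a bf BCvf0.
by under [X in BCvf X]funext do rewrite addr0.
Qed.

Lemma BCvfB f g : BCvf f -> BCvf g -> BCvf (fun z => f z - g z).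
Proof.
move=> bf bg; have := BCvf_comb (-1) bg bf.
by under [X in BCvf X]funext do rewrite scaleN1r addrC.
Qed.

Lemma in_M0 xi : in_M xi -> xi (fun _ => 0) = 0.
Proof.
move=> [lin _]; have := lin 1 _ _ BCvf0 BCvf0.
under [X in xi X = _]funext do rewrite scaler0 addr0.
by move/eqP; rewrite mul1r -subr_eq subrr eq_sym => /eqP.
Qed.

Lemma in_MZ xi (a : R) f : in_M xi -> BCvf f -> xi (fun z => a *: f z) = a * xi f.
Proof.
move=> hxi bf; have := hxi.1 a _ _ bf BCvf0; rewrite in_M0 // addr0 => <-.
by congr xi; apply/funext => z; rewrite addr0.
Qed.

Lemma in_MB xi f g : in_M xi -> BCvf f -> BCvf g -> xi (fun z => f z - g z) = xi f - xi g.
Proof.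
move=> hxi bf bg; have := hxi.1 (-1) _ _ bg bf.
under [X in xi X = _]funext do rewrite scaleN1r addrC.
by move=> ->; rewrite mulN1r addrC.
Qed.

Lemma supnorm_ub th : Defs.bounded_fun th -> forall x, `|th x| <= supnorm th.
Proof. by move=> [M thM] x; apply: ub_le_sup; [exists M => _ [y _ <-] | exists x]. Qed.

Lemma supnorm_le th (M : R) : (forall x, `|th x| <= M) -> supnorm th <= M.
Proof. by move=> thM; apply: ge_sup; [exists `|th 0|, 0 | move=> _ [y _ <-]]. Qed.

Lemma supnorm_ge0 th : Defs.bounded_fun th -> 0 <= supnorm th.
Proof. by move=> b; apply: le_trans (supnorm_ub b 0). Qed.

Lemma supnorm0 : supnorm (fun _ : 'rV[R]_d => 0 : 'rV[R]_d) = 0.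
Proof.
apply/le_anti; rewrite supnorm_ge0 ?andbT; last exact: BCvf0.2.
by apply: supnorm_le => x; rewrite normr0.
Qed.

Lemma in_M_bounded xi : in_M xi ->
  exists2 c, 0 <= c & forall th, BCvf th -> `|xi th| <= c * supnorm th.
Proof.
move=> [_ [c hc]]; exists `|c| => // th bth; apply: le_trans (hc _ bth) _.
by apply: ler_wpM2r; [exact: supnorm_ge0 bth.2 | exact: ler_norm].
Qed.

Lemma in_M_Msub xi xi' : in_M xi -> in_M xi' -> in_M (Msub xi xi').
Proof.
move=> h1 h2; split; first by move=> a t1 t2 b1 b2; rewrite /Msub h1.1 // h2.1 //; ring.
have [c1 c10 hc1] := in_M_bounded h1; have [c2 c20 hc2] := in_M_bounded h2.
exists (c1 + c2) => th bth; rewrite /Msub (le_trans (ler_normB _ _))// mulrDl.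
by rewrite lerD ?hc1 ?hc2.
Qed.

Lemma wnorm_ub xi th L : in_M xi -> BCvf th -> lip_le th L -> supnorm th + L <= 1 ->
  xi th <= wnorm xi.
Proof.
move=> hxi bth lth sL; apply: ub_le_sup; last by exists th => //; split => //; exists L.
have [c c0 hc] := in_M_bounded hxi; exists c => _ [t [bt [L' [lt' sL']]] <-].
apply: le_trans (ler_norm _) _; apply: le_trans (hc _ bt) _.
rewrite -[leRHS]mulr1 ler_wpM2l //.
have [L'0|t0] := lip_le_ge0_or_zero lt'; first by apply: le_trans sL'; rewrite lerDl.
by apply: le_trans ler01; apply: supnorm_le => x; rewrite t0.
Qed.

Lemma wnorm_ge0 xi : in_M xi -> 0 <= wnorm xi.
Proof.
move=> hxi; rewrite -(in_M0 hxi); apply: (@wnorm_ub _ _ 0) => //.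
- exact: BCvf0.
- by move=> x y; rewrite subrr normr0 mul0r.
- by rewrite supnorm0 addr0 ler01.
Qed.

Lemma wnorm_bound xi th L : in_M xi -> BCvf th -> lip_le th L -> 0 <= L ->
  `|xi th| <= wnorm xi * (supnorm th + L).
Proof.
move=> hxi bth lth L0; have s0 := supnorm_ge0 bth.2.
have [s_eq0|s_neq0] := eqVneq (supnorm th + L) 0.
  have -> : th = fun _ => 0.
    apply/funext => x; apply/eqP; rewrite -normr_le0.
    apply: le_trans (supnorm_ub bth.2 x) _; lra.
  by rewrite in_M0 // normr0 supnorm0 add0r mulr_ge0 ?wnorm_ge0.
have s_gt0 : 0 < supnorm th + L by rewrite lt_def s_neq0 addr_ge0.
set s := supnorm th + L in s_gt0 s_neq0 *.
(* [th / s] lies in the unit ball of the dual norm, and so does [- th / s]. *)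
have scaled a : `|a| = s^-1 -> a * xi th <= wnorm xi.
  move=> ha; rewrite -in_MZ //; apply: (wnorm_ub (L := L / s)) => //.
  - exact: BCvfZ.
  - move=> x y; rewrite -scalerBr normrZ ha mulrAC mulrC.
    by apply: ler_wpM2r; [rewrite invr_ge0 ltW | exact: lth].
  - apply: (@le_trans _ _ (supnorm th / s + L / s)); last by rewrite -mulrDl divff.
    rewrite lerD2r; apply: supnorm_le => x; rewrite normrZ ha mulrC.
    by rewrite ler_pM2r ?invr_gt0 //; exact: supnorm_ub bth.2 x.
have /(ler_wpM2l (ltW s_gt0)) : s^-1 * xi th <= wnorm xi.
  by apply: scaled; rewrite ger0_norm // invr_ge0 ltW.
have /(ler_wpM2l (ltW s_gt0)) : - s^-1 * xi th <= wnorm xi.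
  by apply: scaled; rewrite normrN ger0_norm // invr_ge0 ltW.
rewrite !mulrA mulrN mulfV // mulN1r mul1r => hN hP.
by rewrite ler_norml [wnorm xi * _]mulrC -lerNl hN hP.
Qed.

End DualNorm.

Section MeanValue.
Context {R : realType} {d : nat}.

Lemma derive_line (g : 'rV[R]_d -> R) q v t : derivable g (q + t *: v) v ->
  derivable (fun s : R => g (q + s *: v)) t 1 /\
  derive (fun s : R => g (q + s *: v)) t 1 = derive g (q + t *: v) v.
Proof.
have E : (fun h : R => h^-1 *: (((fun s : R => g (q + s *: v)) \o shift t) (h *: 1)
            - g (q + t *: v)))
       = (fun h : R => h^-1 *: ((g \o shift (q + t *: v)) (h *: v) - g (q + t *: v))).
  apply/funext => h /=; rewrite /shift; congr (_ *: (g _ - _)).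
  by rewrite -[h *: 1]/(h * 1) mulr1 scalerDl addrCA addrC.
by rewrite /derivable /derive E.
Qed.

Lemma mvt_line m n (G : 'rV[R]_d -> 'M[R]_(m, n)) v a b :
  (forall p, derivable G p v) -> forall q (h : R),
  exists2 c : R, `|c| <= `|h| &
    G (q + h *: v) a b - G q a b = h * derive G (q + c *: v) v a b.
Proof.
move=> dG q h; set f := fun s : R => G (q + s *: v) a b.
have df (t : R) : is_derive t 1 f (derive G (q + t *: v) v a b).
  have dg : derivable (fun x => G x a b) (q + t *: v) v.
    by move/derivable_mxP: (dG (q + t *: v)); apply.
  have [df1 df2] := derive_line dg.
  by rewrite derive_mx // mxE -df2; exact: derivableP.
have cf (t : R) : {for t, continuous f}.
  by apply/differentiable_continuous/derivable1_diffP; exact: (df t).(ex_derive).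
have -> : G q a b = f 0 by rewrite /f scale0r addr0.
have [h0|h0] := leP 0 h.
  have [c /andP[c0 ch] ->] := MVT_segment h0 (fun x _ => df x) (continuous_subspaceT cf).
  by exists c; [rewrite !ger0_norm // (le_trans c0) | rewrite subr0 mulrC].
have [c /andP[c0 ch] e] := MVT_segment (ltW h0) (fun x _ => df x) (continuous_subspaceT cf).
exists c; first by rewrite !ler0_norm ?lerN2 // ?(le_trans _ ch) // ltW.
by rewrite -[f h - f 0]opprB e sub0r mulrN opprK mulrC.
Qed.

Lemma normr_evec (i : 'I_d) : `|evec R i| <= 1.
Proof.
apply: mx_normr_le => // a b; rewrite /evec mxE.
by case: (_ && _); rewrite ?normr1 ?normr0.
Qed.

(* Telescope along the path that switches the coordinates of [y] to those of
   [x] one at a time, applying the mean value theorem on each segment. *)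
Lemma lipschitz_of_derive m n (G : 'rV[R]_d -> 'M[R]_(m, n)) M : 0 <= M ->
  (forall i p, derivable G p (evec R i)) ->
  (forall i p, `|derive G p (evec R i)| <= M) ->
  forall x y, `|G x - G y| <= (d%:R * M) * `|x - y|.
Proof.
move=> M0 dG bG x y; apply: mx_normr_le; first by rewrite !mulr_ge0.
move=> a b; rewrite !mxE.
pose p (k : nat) : 'rV[R]_d := \row_j (if (j < k)%N then x 0 j else y 0 j).
have -> : G x a b - G y a b = \sum_(k < d) (G (p k.+1) a b - G (p k) a b).
  rewrite -(big_mkord xpredT (fun k => G (p k.+1) a b - G (p k) a b)) telescope_sumr //.
  by congr (G _ a b - G _ a b); apply/rowP => j; rewrite mxE ?ltn_ord.
have -> : d%:R * M * `|x - y| = \sum_(k < d) (M * `|x - y|).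
  by rewrite sumr_const card_ord -mulrA mulr_natl.
apply: le_trans (ler_norm_sum _ _ _) _; apply: ler_sum => k _.
have -> : p k.+1 = p k + (x 0 k - y 0 k) *: evec R k.
  apply/rowP => j; rewrite !mxE eqxx /= ltnS leq_eqVlt.
  have [->|jk] := eqVneq j k; first by rewrite eqxx ltnn /= mulr1 addrC subrK.
  have jk' : nat_of_ord j != k by apply: contra jk => /eqP/val_inj ->.
  by rewrite mulr0 addr0 (negbTE jk').
have [c _ ->] := mvt_line a b (dG k) (p k) (x 0 k - y 0 k).
rewrite normrM mulrC; apply: ler_pM => //.
  exact: le_trans (normr_mx_entry _ a b) (bG _ _).
by have := normr_mx_entry (x - y) 0 k; rewrite !mxE.
Qed.

Lemma unif_diff_quotient m n (G : 'rV[R]_d -> 'M[R]_(m, n)) i :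
  (forall p, derivable G p (evec R i)) ->
  unif_cont (fun p => derive G p (evec R i)) ->
  forall e : R, 0 < e -> exists2 del : R, 0 < del &
    forall q (h : R), h != 0 -> `|h| < del ->
      `|h^-1 *: (G (q + h *: evec R i) - G q) - derive G q (evec R i)| <= e.
Proof.
move=> dG uG e e0; have [del del0 hdel] := uG e e0; exists del => // q h h0 hd.
apply: mx_normr_le => [|a b]; first exact: ltW.
rewrite !mxE; have [c hc ->] := mvt_line a b dG q h.
rewrite mulrA mulVf // mul1r.
have := hdel (q + c *: evec R i) q; rewrite addrAC subrr add0r normrZ => close.
apply: ltW; apply: le_lt_trans (close _).
  by have := normr_mx_entry (derive G (q + c *: evec R i) (evec R i)
                               - derive G q (evec R i)) a b; rewrite !mxE.
apply: le_lt_trans hd; apply: le_trans hc.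
by rewrite -[leRHS]mulr1 ler_wpM2l // normr_evec.
Qed.

End MeanValue.

Section Convolution.
Context {R : realType} {d : nat}.
Implicit Types (G : 'rV[R]_d -> 'M[R]_(d, d)) (xi : ('rV[R]_d -> 'rV[R]_d) -> R).

Lemma BCvf_kernel_row G x a : continuous G -> Defs.bounded_fun G ->
  BCvf (fun z => row a (G (x - z))).
Proof.
move=> cG [M GM]; split; last by exists M => z; exact: le_trans (normr_row _ _) (GM _).
move=> z; apply: (@continuous_at_dominated _ _ _ _ (fun z => G (x - z))).
  have sub_cont : {for z, continuous (fun w : 'rV[R]_d => x - w)}.
    apply: (@continuous_at_dominated _ _ _ _ id) => [|w]; first exact: cvg_id.
    by rewrite opprB addrC addrA subrK distrC.
  exact: continuous_comp sub_cont (cG (x - z)).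
by move=> w; rewrite -rowB normr_row.
Qed.

Lemma Kconv_Msub G xi xi' x : Kconv G xi x - Kconv G xi' x = Kconv G (Msub xi xi') x.
Proof. by apply/rowP => j; rewrite !mxE. Qed.

Lemma Kconv_bound G M L xi x : in_M xi -> continuous G -> (forall p, `|G p| <= M) ->
  (forall p q, `|G p - G q| <= L * `|p - q|) -> 0 <= L -> 0 <= M ->
  `|Kconv G xi x| <= wnorm xi * (M + L).
Proof.
move=> hxi cG bG lG L0 M0; apply: mx_normr_le => [|i a].
  by rewrite mulr_ge0 ?wnorm_ge0 ?addr_ge0.
have bth := BCvf_kernel_row x a cG (ex_intro _ M bG).
rewrite mxE; apply: le_trans (wnorm_bound hxi bth _ L0) _.
  move=> z w; rewrite -rowB; apply: le_trans (normr_row _ _) _.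
  by apply: le_trans (lG _ _) _; rewrite opprB addrC addrA subrK distrC.
rewrite ler_wpM2l ?wnorm_ge0 // lerD2r; apply: supnorm_le => z.
exact: le_trans (normr_row _ _) (bG _).
Qed.

Lemma Kconv_continuous G xi : in_M xi -> continuous G -> Defs.bounded_fun G -> unif_cont G ->
  continuous (Kconv G xi).
Proof.
move=> hxi cG bG uG x; apply/(cvgrPdist_le (FF := nbhs_filter x)) => e e0.
have [c c0 hc] := in_M_bounded hxi.
have [del del0 hdel] := uG (e / (c + 1)) (divr_gt0 e0 (ltr_pwDr ltr01 c0)).
apply: filterS (@cvgr_dist_lt _ _ _ _ (nbhs_filter x) id x cvg_id del del0) => y xy.
apply: mx_normr_le => [|i a]; first exact: ltW.
rewrite !mxE -in_MB //; try exact: BCvf_kernel_row.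
apply: le_trans (hc _ (BCvfB (BCvf_kernel_row _ _ cG bG) (BCvf_kernel_row _ _ cG bG))) _.
apply: (@le_trans _ _ (c * (e / (c + 1)))).
  apply: ler_wpM2l => //; apply: supnorm_le => z.
  rewrite -rowB; apply/(le_trans (normr_row _ _))/ltW/hdel.
  by rewrite opprB addrA subrK.
by rewrite mulrA ler_pdivrMr ?ltr_pwDr //; lra.
Qed.

Lemma Kconv_derive G i xi x : in_M xi -> continuous G -> Defs.bounded_fun G ->
  (forall p, derivable G p (evec R i)) ->
  continuous (fun p => derive G p (evec R i)) ->
  Defs.bounded_fun (fun p => derive G p (evec R i)) ->
  unif_cont (fun p => derive G p (evec R i)) ->
  derivable (Kconv G xi) x (evec R i) /\
  derive (Kconv G xi) x (evec R i) = Kconv (fun p => derive G p (evec R i)) xi x.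
Proof.
move=> hxi cG bG dG cGi bGi uGi.
set Gi := fun p => derive G p (evec R i) in cGi bGi uGi *.
suff quot : (fun h : R => h^-1 *: ((Kconv G xi \o shift x) (h *: evec R i) - Kconv G xi x))
           @ 0^' --> Kconv Gi xi x.
  by split; [apply/cvg_ex; exists (Kconv Gi xi x) | exact: cvg_lim quot].
apply/cvgrPdist_le => e e0.
have [c c0 hc] := in_M_bounded hxi.
have [del del0 hdel] := unif_diff_quotient dG uGi (e / (c + 1)) (divr_gt0 e0 (ltr_pwDr ltr01 c0)).
near=> h.
have h0 : h != 0 by near: h; exact: nbhs_dnbhs_neq.
have hd : `|h| < del by near: h; exact: dnbhs0_lt.
apply: mx_normr_le => [|j a]; first exact: ltW.
have b1 := BCvf_kernel_row (h *: evec R i + x) a cG bG.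
have b0 := BCvf_kernel_row x a cG bG.
have bi := BCvf_kernel_row x a cGi bGi.
have bq := BCvfZ h^-1 (BCvfB b1 b0).
rewrite !mxE /shift -in_MB // -in_MZ //; last exact: BCvfB.
rewrite -in_MB //; apply: le_trans (hc _ (BCvfB bi bq)) _.
apply: (@le_trans _ _ (c * (e / (c + 1)))); last first.
  by rewrite mulrA ler_pdivrMr ?ltr_pwDr //; lra.
apply: ler_wpM2l => //; apply: supnorm_le => z.
have -> : row a (Gi (x - z)) - h^-1 *: (row a (G (h *: evec R i + x - z)) - row a (G (x - z)))
   = row a (Gi (x - z) - h^-1 *: (G (x - z + h *: evec R i) - G (x - z))).
  apply/rowP => k; rewrite !mxE; congr (_ - _ * (_ - _)).
  by rewrite [h *: _ + x]addrC addrAC.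
by apply: le_trans (normr_row _ _) _; rewrite distrC; exact: hdel.
Unshelve. all: by end_near. Qed.

End Convolution.

Section FiniteBounds.
Context {R : realType}.

Lemma finite_ub (T : finType) (P : T -> R -> Prop) :
  (forall t M M', P t M -> M <= M' -> P t M') ->
  (forall t, exists M, P t M) -> exists2 M, 0 <= M & forall t, P t M.
Proof.
move=> mono /choice[f Pf]; exists (\sum_t `|f t|); first exact: sumr_ge0.
move=> t; apply: mono (Pf t) _; apply: le_trans (ler_norm _) _.
by rewrite (bigD1 t) //= lerDl sumr_ge0.
Qed.

Lemma short_seq_ub (T : finType) k (P : seq T -> R -> Prop) :
  (forall s M M', P s M -> M <= M' -> P s M') ->
  (forall s, (size s <= k)%N -> exists M, P s M) ->
  exists2 M, 0 <= M & forall s, (size s <= k)%N -> P s M.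
Proof.
move=> mono; elim: k => [|k IH] Pk.
  have [M PM] := Pk [::] isT.
  by exists `|M| => // -[|//] _; exact: mono PM (ler_norm M).
have [M1 M10 P1] := IH (fun s hs => Pk s (leqW hs)).
have [M2 M20 P2] := finite_ub _ (fun t : k.+1.-tuple T => P t)
  (fun t => mono t) (fun t => Pk t (eq_leq (size_tuple t))).
exists (Num.max M1 M2); first by rewrite le_max M10.
move=> s; rewrite leq_eqVlt ltnS => /orP[/eqP s_eq|s_le].
  by apply: mono (P2 (Tuple (introT eqP s_eq))) _; rewrite le_max lexx orbT.
by apply: mono (P1 s s_le) _; rewrite le_max lexx.
Qed.

Lemma sup_le (S : set R) (b : R) : 0 <= b -> (forall r, S r -> r <= b) -> sup S <= b.
Proof.
move=> b0 Sb; have [S_neq0|S0] := pselect (S !=set0); first exact: ge_sup.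
have -> : S = set0 by apply/seteqP; split => // r Sr; exfalso; apply: S0; exists r.
by rewrite sup0.
Qed.

Lemma Cb_norm_le {d : nat} (V : normedModType R) k (f : 'rV[R]_d -> V) c : 0 <= c ->
  (forall s, (size s <= k)%N -> forall x, `|pder s f x| <= c) -> Cb_norm k f <= c *+ k.+1.
Proof.
move=> c0 fc; rewrite /Cb_norm; have -> : c *+ k.+1 = \sum_(j < k.+1) c by rewrite sumr_const card_ord.
apply: ler_sum => j _.
by apply: sup_le => // _ [s [x [sj ->]]]; apply: fc; rewrite sj -ltnS.
Qed.

End FiniteBounds.

Section Kernel.
Context {R : realType} {d : nat} (K : 'rV[R]_d -> 'M[R]_(d, d)).
Hypothesis K_UCb3 : UCb3 K.
Implicit Types (xi : ('rV[R]_d -> 'rV[R]_d) -> R).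

Let Kder s : (size s < 3)%N -> forall i x, derivable (pder s K) x (evec R i) :=
  K_UCb3.1.1 s.
Let Kcont s : (size s <= 3)%N -> continuous (pder s K) := fun hs => (K_UCb3.1.2 s hs).1.
Let Kbnd s : (size s <= 3)%N -> Defs.bounded_fun (pder s K) := fun hs => (K_UCb3.1.2 s hs).2.
Let Kunif s : (size s <= 2)%N -> unif_cont (pder s K) := K_UCb3.2 s.

Lemma Kconv_pder_derive s i xi x : (size s <= 1)%N -> in_M xi ->
  derivable (Kconv (pder s K) xi) x (evec R i) /\
  derive (Kconv (pder s K) xi) x (evec R i) = Kconv (pder (i :: s) K) xi x.
Proof.
move=> hs hxi; have hs3 : (size (i :: s) <= 3)%N by exact: leq_trans hs _.
apply: Kconv_derive => //.
- exact/Kcont/ltnW.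
- exact/Kbnd/ltnW.
- by move=> p; apply: Kder; exact: leq_ltn_trans hs _.
- exact: (Kcont (i :: s) hs3).
- exact: (Kbnd (i :: s) hs3).
- exact: (Kunif (i :: s) hs).
Qed.

Lemma pder_Kconv s xi : (size s <= 2)%N -> in_M xi ->
  pder s (Kconv K xi) = Kconv (pder s K) xi.
Proof.
elim: s => [//|i s IH] /= hs hxi; rewrite IH //; last exact: ltnW.
by apply/funext => x; exact: (Kconv_pder_derive _ _ _ hs hxi).2.
Qed.

Lemma pder_Kconv_Msub s xi xi' x : (size s <= 2)%N -> in_M xi -> in_M xi' ->
  pder s (Kconv K xi) x - pder s (Kconv K xi') x = pder s (Kconv K (Msub xi xi')) x.
Proof. by move=> hs hxi hxi'; rewrite !pder_Kconv ?Kconv_Msub //; exact: in_M_Msub. Qed.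

Lemma pder_Kconv_bound : exists2 C, 0 < C & forall s, (size s <= 2)%N ->
  forall xi, in_M xi -> forall x, `|pder s (Kconv K xi) x| <= C * wnorm xi.
Proof.
pose P s C := forall xi, in_M xi -> forall x, `|pder s (Kconv K xi) x| <= C * wnorm xi.
suff [M M0 PM] : exists2 M, 0 <= M & forall s, (size s <= 2)%N -> P s M.
  exists (M + 1) => [|s hs xi hxi x]; first by rewrite ltr_pwDr.
  by apply: le_trans (PM s hs xi hxi x) _; rewrite ler_wpM2r ?wnorm_ge0 ?lerDl.
apply: short_seq_ub => [s C C' PC CC' xi hxi x|s hs].
  by apply: le_trans (PC xi hxi x) _; rewrite ler_wpM2r ?wnorm_ge0.
have hs3 : (size s <= 3)%N by exact: leq_trans hs _.
have [MG GM] := Kbnd s hs3.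
have [M' M'0 DGM] : exists2 M', 0 <= M' &
    forall i p, `|derive (pder s K) p (evec R i)| <= M'.
  apply: (finite_ub _ (fun i M' => forall p, `|derive (pder s K) p (evec R i)| <= M')).
    by move=> i a b ab_le ab p; exact: le_trans (ab_le p) ab.
  by move=> i; exact: (Kbnd (i :: s) hs).
exists (`|MG| + d%:R * M') => xi hxi x; rewrite pder_Kconv // mulrC.
apply: Kconv_bound; rewrite ?mulr_ge0 //; first exact: Kcont s hs3.
  by move=> p; exact: le_trans (GM p) (ler_norm _).
exact: lipschitz_of_derive M'0 (Kder s (leq_ltn_trans hs _)) DGM.
Qed.

Lemma Kconv_Cb2 xi : in_M xi -> Cb 2 (Kconv K xi).
Proof.
move=> hxi; split => s hs.
  by move=> i x; rewrite pder_Kconv ?(ltnW hs) //; exact: (Kconv_pder_derive _ _ _ hs hxi).1.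
split; last by have [C _ CB] := pder_Kconv_bound; exists (C * wnorm xi); exact: CB.
rewrite pder_Kconv //; apply: Kconv_continuous => //; last exact: Kunif.
  exact/Kcont/(leq_trans hs).
exact/Kbnd/(leq_trans hs).
Qed.

End Kernel.

Unset Implicit Arguments.

Theorem lemma3p1 (R : realType) (d : nat) (K : 'rV[R]_d -> 'M[R]_(d,d)) :
  UCb3 K ->
  let B := Kconv K in
  (forall xi, in_M xi -> Cb 2 (B xi)) /\
  (forall xi, in_M xi -> forall e : R, 0 < e -> exists2 del : R, 0 < del &
     forall xi', in_M xi' -> wnorm (Msub xi' xi) < del ->
       Cb_norm 2 (fun x => B xi' x - B xi x) < e) /\
  (exists2 CB : R, 0 < CB &
     forall xi xi', in_M xi -> in_M xi' ->
       [/\ Cb_norm 2 (B xi) <= CB * (wnorm xi + 1),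
           supnorm (fun x => B xi x - B xi' x) <= CB * wnorm (Msub xi xi') &
           sup [set r | exists (i : 'I_d) (x : 'rV[R]_d),
                  r = `|pder [:: i] (B xi) x - pder [:: i] (B xi') x|]
             <= CB * wnorm (Msub xi xi')]).
Proof.
move=> hK B; rewrite /B {B}.
have [C C_gt0 CB] := pder_Kconv_bound hK.
have Cb_normB xi : in_M xi -> Cb_norm 2 (Kconv K xi) <= C * wnorm xi *+ 3.
  move=> hxi; apply: Cb_norm_le => [|s hs]; last exact: CB.
  by rewrite mulr_ge0 ?wnorm_ge0 ?ltW.
have Bsub xi xi' : (fun x => Kconv K xi x - Kconv K xi' x) = Kconv K (Msub xi xi').
  exact/funext/Kconv_Msub.
split; first exact: Kconv_Cb2.
split.
  move=> xi hxi e e0; exists (e / (C *+ 3)); first by rewrite divr_gt0 ?mulrn_wgt0.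
  move=> xi' hxi' small; rewrite Bsub; apply: le_lt_trans (Cb_normB _ (in_M_Msub hxi' hxi)) _.
  by rewrite -mulrnAl mulrC -ltr_pdivlMr ?mulrn_wgt0.
have C3 : C <= C *+ 3 + 1 by rewrite -mulr_natr; lra.
exists (C *+ 3 + 1); first exact: lt_le_trans C3.
move=> xi xi' hxi hxi'; have hm := in_M_Msub hxi hxi'.
have weak : C * wnorm (Msub xi xi') <= (C *+ 3 + 1) * wnorm (Msub xi xi').
  by rewrite ler_wpM2r ?wnorm_ge0.
split.
- apply: le_trans (Cb_normB _ hxi) _; have := wnorm_ge0 hxi.
  rewrite -mulrnAl -mulr_natr; nra.
- by rewrite Bsub; apply/(le_trans _ weak)/supnorm_le; exact: (CB [::]).
- apply: sup_le => [|_ [i [x ->]]].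
    by rewrite mulr_ge0 ?wnorm_ge0 // (le_trans (ltW C_gt0)).
  by rewrite pder_Kconv_Msub //; apply: le_trans weak; exact: CB.
Qed.
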